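(* Let $k$ be odd. Let $F$ be the set of the $2n$ frame positions, partitioned into the $n$ pairs $\{p,p'\}$ where $p,p'\in F$ have the same set $B(p)=B(p')=\{s\}$ and $\{p_s,p'_s\}=\{0,k-1\}$. Then for every combination $g$: $g(F)=F$; $g$ maps each pair onto a pair (so the partition of the $2n$ frame cubies into pairs is preserved, and its index $B_1$ among the $(2n)!/(2^n n!)$ partitions of $2n$ objects into pairs is invariant); and $\operatorname{sgn}(g|_F)\cdot\operatorname{sgn}(\hat g)=1$, where $\hat g$ is the permutation of the set of $n$ pairs induced by $g$ (so $B_2=\operatorname{sgn}(\sigma_c)\operatorname{sgn}(\sigma_p)$ is invariant).
   Context: Fix integers $k\ge2$, $n\ge3$, $M=\{0,\dots,k-1\}$. Positions are $p\in M^n$; $B(p)=\{i:p_i\in\{0,k-1\}\}$. For distinct $i,j$, $\psi_{i,j}:M^n\to M^n$ is $(\psi_{i,j}p)_i=k-1-p_j$, $(\psi_{i,j}p)_j=p_i$, other coordinates unchanged. A move is given by distinct $i,j$ and constants $c_l\in M$ ($l\notin\{i,j\}$): it sends each position $p$ with $p_l=c_l$ ($l\notin\{i,j\}$) to $\psi_{i,j}(p)$ and fixes the other positions; a combination is a finite sequence of moves, regarded as the composite permutation of positions. For odd $k$, the frame positions are those with exactly one coordinate in $\{0,k-1\}$ and all other coordinates equal to $(k-1)/2$. For two states of the frame, $\sigma_c$ denotes the permutation of frame cubies and $\sigma_p$ the permutation of pairs relating them. *)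

From mathcomp Require Import all_boot all_order all_fingroup.
Set Implicit Arguments. Unset Strict Implicit. Unset Printing Implicit Defensive.

Definition pos (n k : nat) := {ffun 'I_n -> 'I_k}.

Lemma flip_subproof k (x : 'I_k) : k.-1 - x < k.
Proof. case: x => x /=; case: k => [//|k] _ /=; by rewrite ltnS leq_subr. Qed.

Definition flip k (x : 'I_k) : 'I_k := Ordinal (flip_subproof x).

Definition bnd k (x : 'I_k) : bool := (val x == 0) || (val x == k.-1).
Definition B n k (p : pos n k) : {set 'I_n} := [set i | bnd (p i)].

Definition psi n k (i j : 'I_n) (p : pos n k) : pos n k :=
  [ffun l => if l == i then flip (p j) else if l == j then p i else p l].

(* A move: distinct i, j and constants c_l (l not in {i,j}); the values c i, c j
   are irrelevant. *)
Definition move n k (i j : 'I_n) (c : pos n k) (p : pos n k) : pos n k :=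
  if [forall l, (l != i) ==> (l != j) ==> (p l == c l)] then psi i j p else p.

Definition move_data n k := ('I_n * 'I_n * pos n k)%type.

Definition valid_move n k (m : move_data n k) : bool := m.1.1 != m.1.2.

Definition comp_moves n k (ms : seq (move_data n k)) : pos n k -> pos n k :=
  foldr (fun m f => move m.1.1 m.1.2 m.2 \o f) id ms.

Definition is_combination n k (g : {perm pos n k}) : Prop :=
  exists ms : seq (move_data n k), all (@valid_move n k) ms /\ g =1 comp_moves ms.

Definition frame n k : {set pos n k} :=
  [set p | (#|B p| == 1) && [forall i, bnd (p i) || (val (p i) == k.-1./2)]].

Definition paired n k (p q : pos n k) : bool :=
  (B p == B q) &&
  [exists s, (B p == [set s]) &&
     (((val (p s) == 0) && (val (q s) == k.-1)) ||
      ((val (p s) == k.-1) && (val (q s) == 0)))].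

Definition frame_pairs n k : {set {set pos n k}} :=
  [set [set p; q] | p in frame n k, q in frame n k & paired p q].

Definition induced n k (g : {perm pos n k}) : {perm {set pos n k}} :=
  actperm ('P^*)%act g.

From mathcomp Require Import all_boot all_order all_fingroup all_algebra.
From mathcomp Require Import zify.
Import GRing.Theory.

(* Frame positions are parametrized by a coordinate s and a side b: the
   endpoint 0 or k-1 in coordinate s and the centre (k-1)/2 elsewhere.  A move
   whose constants c_l are all central acts on them like psi_{i,j}, i.e. as the
   4-cycle (i,0) -> (j,0) -> (i,k-1) -> (j,k-1) -> (i,0), an odd permutation,
   and on the pairs as the transposition of coordinates i and j, also odd;
   every other move fixes the frame pointwise.  So each move lies in the group
   of permutations stabilising the frame and its pairs with equal signs on
   both, and hence so does every combination. *)

Set Implicit Arguments. Unset Strict Implicit. Unset Printing Implicit Defensive.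
Local Open Scope group_scope.

Section PermOn.
Variables (T : finType) (S : {set T}).
Implicit Types (p q : {perm T}).

Lemma perm_on_tperm x y : x \in S -> y \in S -> perm_on S (tperm x y).
Proof.
by move=> xS yS; apply: subset_trans (tperm_on x y) _; rewrite subUset !sub1set xS.
Qed.

Lemma astabs_perm_on p q : perm_on S q -> {in S, p =1 q} -> p \in 'N(S | 'P).
Proof.
move=> qS pq; rewrite !inE; apply/subsetP => x xS.
by rewrite inE /= /aperm pq // perm_closed.
Qed.

Lemma restr_perm_on_eq p q : perm_on S q -> {in S, p =1 q} -> restr_perm S p = q.
Proof.
move=> qS pq; have nSp := astabs_perm_on qS pq.
apply/permP => x; have [xS | xNS] := boolP (x \in S).
  by rewrite restr_permE // pq.
by rewrite !(out_perm _ xNS) // restr_perm_on.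
Qed.

End PermOn.

Section SignCoherent.
Variables (T : finType) (F : {set T}) (Ps : {set {set T}}).

Local Notation setperm := (actperm 'P^*).

Definition sign_coherent : {set {perm T}} :=
  [set g | [&& g \in 'N(F | 'P), setperm g \in 'N(Ps | 'P) &
              odd_perm (restr_perm F g) == odd_perm (restr_perm Ps (setperm g))]].

Lemma sign_coherentP g :
  reflect [/\ g \in 'N(F | 'P), setperm g \in 'N(Ps | 'P) &
              odd_perm (restr_perm F g) = odd_perm (restr_perm Ps (setperm g))]
          (g \in sign_coherent).
Proof. by rewrite [g \in sign_coherent]inE; apply: (iffP and3P) => -[nFg nPg /eqP]. Qed.

Lemma sign_coherent_group_set : group_set sign_coherent.
Proof.
apply/group_setP; split=> [|g h].
  by apply/sign_coherentP; rewrite !morph1 !group1 !odd_perm1.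
move=> /sign_coherentP[nFg nPg sg] /sign_coherentP[nFh nPh sh].
apply/sign_coherentP; rewrite actpermM ?in_setT // !groupM //.
by rewrite !morphM //= !odd_permM sg sh.
Qed.

Canonical sign_coherent_group := Group sign_coherent_group_set.

End SignCoherent.

Section Combinations.
Variables n k : nat.

Lemma flipK : involutive (@flip k).
Proof. by move=> x; apply: val_inj => /=; have := ltn_ord x; lia. Qed.

Lemma psi_inj (i j : 'I_n) : injective (@psi n k i j).
Proof.
move=> p q /ffunP E; apply/ffunP => l.
have Ej : p j = q j by apply: (can_inj flipK); have := E i; rewrite !ffunE eqxx.
have := E l; rewrite !ffunE; case: (eqVneq l i) => [-> _ | _].
  by have := E j; rewrite !ffunE eqxx; case: eqP => [<-|]; rewrite ?Ej.
by case: (eqVneq l j) => [->|].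
Qed.

Lemma move_inj (i j : 'I_n) (c : pos n k) : injective (move i j c).
Proof.
have guard_psi p : [forall l, (l != i) ==> (l != j) ==> (psi i j p l == c l)] =
                   [forall l, (l != i) ==> (l != j) ==> (p l == c l)].
  by apply: eq_forallb => l; rewrite ffunE; case: (eqVneq l i) => //= _; case: eqVneq.
move=> p q; rewrite /move.
case gp: [forall l, _]; case gq: [forall l, _] => E //; first exact: psi_inj E.
- by move: gq; rewrite -E guard_psi gp.
- by move: gp; rewrite E guard_psi gq.
Qed.

Definition move_perm (m : move_data n k) : {perm pos n k} :=
  perm (@move_inj m.1.1 m.1.2 m.2).

Lemma combination_in (G : {group {perm pos n k}}) g :
  (forall m, valid_move m -> move_perm m \in G) -> is_combination g -> g \in G.
Proof.
move=> GM [ms [/allP valid g_ms]].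
have [h hG ms_h] : exists2 h, h \in G & h =1 comp_moves ms.
  elim: ms valid {g_ms} => [|m ms IH] valid; first by exists 1 => // x; rewrite perm1.
  have [|h hG ms_h] := IH; first by move=> m' m'ms; rewrite valid // inE m'ms orbT.
  exists (h * move_perm m); first by rewrite groupM ?GM ?valid ?mem_head.
  by move=> x; rewrite permM permE ms_h.
by rewrite (_ : g = h) //; apply/permP => x; rewrite g_ms ms_h.
Qed.

End Combinations.

Lemma inducedE n k (g : {perm pos n k}) X : induced g X = g @: X.
Proof. by rewrite /induced actpermE. Qed.

Section Frame.
Variables (n k : nat) (Hk : 2 <= k) (Hodd : odd k).

Lemma lo_subproof : 0 < k. Proof. by case: k Hk. Qed.
Lemma hi_subproof : k.-1 < k. Proof. by case: k Hk. Qed.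
Lemma mid_subproof : k.-1./2 < k. Proof. by case: k Hk => // k' _; lia. Qed.

Definition side (b : bool) : 'I_k :=
  if b then Ordinal hi_subproof else Ordinal lo_subproof.
Definition mid : 'I_k := Ordinal mid_subproof.

Lemma side_eq0 b : (val (side b) == 0) = ~~ b.
Proof. by case: b => //=; case: k Hk => [|[|k']]. Qed.

Lemma side_eq_top b : (val (side b) == k.-1) = b.
Proof. by case: b => /=; [rewrite eqxx | case: k Hk => [|[|k']]]. Qed.

Lemma side_inj : injective side.
Proof. by move=> b c /(congr1 (fun x => val x == 0)); rewrite !side_eq0 => /negb_inj. Qed.

Lemma bnd_side b : bnd (side b).
Proof. by rewrite /bnd side_eq0 side_eq_top orNb. Qed.

Lemma bnd_mid : bnd mid = false.
Proof. by rewrite /bnd /=; move: Hk Hodd; case: k => [|[|k']] //=; lia. Qed.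

Lemma bndP x : bnd x -> x = side (val x == k.-1).
Proof.
case/orP => /eqP x_end; apply: val_inj; rewrite x_end ?eqxx //=.
by have -> : (0 == k.-1) = false by apply/eqP; lia.
Qed.

Lemma flip_side b : flip (side b) = side (~~ b).
Proof. by apply: val_inj; case: b => /=; rewrite ?subnn ?subn0. Qed.

Lemma flip_mid : flip mid = mid.
Proof. by apply: val_inj => /=; move: Hodd; case: k => //= k'; lia. Qed.

Definition frame_pos (s : 'I_n) (b : bool) : pos n k :=
  [ffun l => if l == s then side b else mid].

Lemma B_frame_pos s b : B (frame_pos s b) = [set s].
Proof.
apply/setP => l; rewrite !inE ffunE.
by case: (l == s); rewrite ?bnd_side ?bnd_mid.
Qed.

Lemma frame_pos_frame s b : frame_pos s b \in frame n k.
Proof.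
rewrite inE B_frame_pos cards1 eqxx; apply/forallP => l; rewrite ffunE.
by case: (l == s); rewrite ?bnd_side ?eqxx ?orbT.
Qed.

Lemma frameP p : reflect (exists s b, p = frame_pos s b) (p \in frame n k).
Proof.
apply: (iffP idP) => [|[s [b ->]]]; last exact: frame_pos_frame.
rewrite inE => /andP[/cards1P[s Bs] /forallP onF].
exists s, (val (p s) == k.-1); apply/ffunP => l; rewrite ffunE.
have := onF l; have : l \in B p = (l == s) by rewrite Bs inE.
rewrite inE; case: eqP => [-> /bndP <- // | _ -> /= /eqP l_mid].
exact: val_inj.
Qed.

Lemma eq_frame_pos s b t c :
  (frame_pos s b == frame_pos t c) = (s == t) && (b == c).
Proof.
apply/eqP/andP => [E | [/eqP-> /eqP->] //].
have := congr1 (@B n k) E; rewrite !B_frame_pos => /set1_inj st; subst t; split => //.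
by have := congr1 (fun p : pos n k => p s) E; rewrite !ffunE eqxx => /side_inj ->.
Qed.

Lemma paired_frame_pos s b t c :
  paired (frame_pos s b) (frame_pos t c) = (s == t) && (b != c).
Proof.
rewrite /paired !B_frame_pos (inj_eq set1_inj); have [<- /= | //] := eqVneq s t.
apply/existsP/idP => [[s' /andP[/eqP/set1_inj <-]] | bc].
  by rewrite !ffunE eqxx !side_eq0 !side_eq_top; case: b; case: c.
by exists s; rewrite eqxx !ffunE eqxx !side_eq0 !side_eq_top; case: b c bc => -[].
Qed.

Definition frame_pair (s : 'I_n) : {set pos n k} :=
  [set frame_pos s false; frame_pos s true].

Lemma frame_pairsP P : reflect (exists s, P = frame_pair s) (P \in frame_pairs n k).
Proof.
apply: (iffP imset2P) => [[p q pF] | [s ->]].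
  rewrite inE => /andP[/frameP[t [c ->]] pq ->]; case/frameP: pF pq => s [b ->].
  rewrite paired_frame_pos => /andP[/eqP <- bc]; exists s.
  by case: b c bc => -[] // _; rewrite setUC.
exists (frame_pos s false) (frame_pos s true) => //; first exact: frame_pos_frame.
by rewrite inE frame_pos_frame paired_frame_pos eqxx.
Qed.

Lemma frame_pair_inj : injective frame_pair.
Proof.
move=> s t E; have : frame_pos s false \in frame_pair t by rewrite -E !inE eqxx.
by rewrite !inE !eq_frame_pos andbT andbF orbF => /eqP.
Qed.

Lemma psi_frame_pos i j s b : i != j ->
  psi i j (frame_pos s b) =
  if s == i then frame_pos j b else if s == j then frame_pos i (~~ b) else frame_pos s b.
Proof.
move=> ij; apply/ffunP => l; rewrite !ffunE.
have [-> | si] := eqVneq s i; [|have [-> | sj] := eqVneq s j]; rewrite ffunE.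
all: have [? | li] := eqVneq l i; [subst l|have [? | lj] := eqVneq l j; first subst l].
all: rewrite ?eqxx ?(eq_sym j) ?(eq_sym i s) ?(negbTE ij) ?flip_mid ?flip_side //.
all: by rewrite ?(negbTE si) ?(negbTE sj).
Qed.

Definition central (i j : 'I_n) (c : pos n k) : bool :=
  [forall l, (l != i) ==> (l != j) ==> (c l == mid)].

Lemma move_frame_pos i j c s b : i != j ->
  move i j c (frame_pos s b) =
  if central i j c then psi i j (frame_pos s b) else frame_pos s b.
Proof.
move=> ij; rewrite /move; have [sij | sNij] := boolP (s \in [set i; j]).
  congr (if _ then _ else _); apply: eq_forallb => l; rewrite ffunE.
  case: (eqVneq l i) => //= li; case: (eqVneq l j) => //= lj.
  have /negbTE-> : l != s by apply: contraTneq sij => <-; rewrite !inE negb_or li.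
  by rewrite eq_sym.
move: sNij; rewrite !inE negb_or => /andP[si sj].
by rewrite psi_frame_pos // (negbTE si) (negbTE sj) !if_same.
Qed.

(* The 4-cycle (i,false) -> (j,false) -> (i,true) -> (j,true) -> (i,false)
   on frame positions. *)
Definition frame_cycle (i j : 'I_n) : {perm pos n k} :=
  let x := frame_pos i false in
  tperm x (frame_pos j false) * tperm x (frame_pos i true) * tperm x (frame_pos j true).

Lemma frame_cycleE i j s b : i != j ->
  frame_cycle i j (frame_pos s b) = psi i j (frame_pos s b).
Proof.
move=> ij; rewrite psi_frame_pos // !permM !permE /=.
have [-> | si] := eqVneq s i; [|have [-> | sj] := eqVneq s j]; case: b.
all: by do 4 rewrite /= ?eq_frame_pos ?eqxx ?(eq_sym j) ?(negbTE ij) ?(negbTE si) ?(negbTE sj).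
Qed.

Lemma frame_cycle_on i j : perm_on (frame n k) (frame_cycle i j).
Proof. by rewrite !perm_onM // perm_on_tperm // frame_pos_frame. Qed.

Lemma odd_frame_cycle i j : i != j -> odd_perm (frame_cycle i j).
Proof. by move=> /negbTE ij; rewrite !odd_permM !odd_tperm !eq_frame_pos ij !eqxx. Qed.

Lemma move_perm_frame i j c : i != j ->
  {in frame n k, move_perm (i, j, c) =1 if central i j c then frame_cycle i j else 1}.
Proof.
move=> ij _ /frameP[s [b ->]]; rewrite permE /= move_frame_pos //.
by case: ifP => _; rewrite ?frame_cycleE ?perm1.
Qed.

Lemma induced_move_perm i j c s : i != j ->
  induced (move_perm (i, j, c)) (frame_pair s) =
  frame_pair (if central i j c then tperm i j s else s).
Proof.
move=> ij; rewrite inducedE /frame_pair imsetU1 imset_set1 !permE /= !move_frame_pos //.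
case: ifP => _ //; rewrite !psi_frame_pos //.
case: ifP => _ //; case: ifP => _ //; exact: setUC.
Qed.

Lemma move_perm_frame_pairs i j c : i != j ->
  {in frame_pairs n k, induced (move_perm (i, j, c)) =1
     if central i j c then tperm (frame_pair i) (frame_pair j) else 1}.
Proof.
move=> ij _ /frame_pairsP[s ->]; rewrite induced_move_perm //.
by case: ifP => _; rewrite ?perm1 // (inj_tperm _ _ _ frame_pair_inj).
Qed.

Lemma move_perm_sign_coherent m :
  valid_move m -> move_perm m \in sign_coherent (frame n k) (frame_pairs n k).
Proof.
case: m => [[i j] c] ij.
have agreeF := move_perm_frame c ij; have agreeP := move_perm_frame_pairs c ij.
have onF : perm_on (frame n k) (if central i j c then frame_cycle i j else 1).
  by case: ifP => _; rewrite ?frame_cycle_on ?perm_on1.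
have onP : perm_on (frame_pairs n k)
             (if central i j c then tperm (frame_pair i) (frame_pair j) else 1).
  by case: ifP => _; rewrite ?perm_on1 // perm_on_tperm //; apply/frame_pairsP; eexists.
apply/sign_coherentP; split; [exact: astabs_perm_on agreeF | exact: astabs_perm_on agreeP |].
rewrite (restr_perm_on_eq onF agreeF) (restr_perm_on_eq onP agreeP).
by case: ifP => _; rewrite ?odd_perm1 // odd_frame_cycle // odd_tperm (inj_eq frame_pair_inj).
Qed.

End Frame.

Theorem mainTheorem9 (n k : nat) (Hk : 2 <= k) (Hn : 3 <= n) (Hodd : odd k)
  (g : {perm pos n k}) :
  is_combination g ->
  [/\ g @: frame n k = frame n k,
      (forall P, P \in frame_pairs n k -> g @: P \in frame_pairs n k) &
      ((-1) ^+ odd_perm (restr_perm (frame n k) g) *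
       (-1) ^+ odd_perm (restr_perm (frame_pairs n k) (induced g)) = 1 :> int)%R].
Proof.
move=> comb_g.
have /sign_coherentP[nFg nPg sg] : g \in sign_coherent (frame n k) (frame_pairs n k).
  exact: combination_in (move_perm_sign_coherent Hk Hodd) comb_g.
split.
- exact: astabs_setact nFg.
- by move=> P PF; rewrite -inducedE (astabs_act P nPg) PF.
- by rewrite -signr_addb sg addbb.
Qed.
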